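(* Let $G$ be a finite simple graph and let $\{G_1,\dots,G_b\}$ be an edge decomposition of $G$ (i.e. $G_1,\dots,G_b$ are subgraphs of $G$ whose edge sets partition $E(G)$). Suppose that for each $i=1,\dots,b$, the simple graph $G_i$ has a triangle decomposition, and that $\Delta_0(G_i)\neq\emptyset$. Then $\Delta_0(G)\neq\emptyset$; that is, some multigraph in $\Gamma_0(G)$ has a triangle decomposition.
   Context: For a finite simple graph $G$ and a nonnegative integer $a$, $\Gamma_a(G)$ denotes the set of all multigraphs on the vertex set of $G$ obtained by assigning to the edges of $G$ the multiplicities $a,a+1,\dots,a+|E(G)|-1$, bijectively (each multiplicity used on exactly one edge; an edge with multiplicity $0$ is absent). A triangle decomposition of a (multi)graph is a partition of its edge multiset into triangles (copies of $K_3$). $\Delta_a(G)$ denotes the set of multigraphs in $\Gamma_a(G)$ that admit a triangle decomposition. *)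

From mathcomp Require Import all_boot.
Set Implicit Arguments. Unset Strict Implicit. Unset Printing Implicit Defensive.

(* A multigraph on V is a multiplicity function m : {set V} -> nat
   (only its values on 2-element sets matter). *)

Definition simple_graph (V : finType) (E : {set {set V}}) : Prop :=
  forall e, e \in E -> #|e| = 2.

Definition mult_of_graph (V : finType) (E : {set {set V}}) : {set V} -> nat :=
  fun e => if e \in E then 1 else 0.

(* A triangle decomposition of the multigraph m: a multiset t of triangles
   (3-element vertex sets, t S = number of copies of the triangle S) such that
   every pair e is covered exactly m e times. *)
Definition triangle_decomposable (V : finType) (m : {set V} -> nat) : Prop :=
  exists t : {set V} -> nat,
    (forall S, 0 < t S -> #|S| = 3) /\
    (forall e : {set V}, #|e| = 2 ->
       m e = \sum_(S : {set V} | e \subset S) t S).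

(* Gamma_a(G): multigraphs obtained by assigning bijectively the
   multiplicities a, a+1, ..., a+|E|-1 to the edges of G (0 elsewhere). *)
Definition in_Gamma (V : finType) (a : nat) (E : {set {set V}})
    (m : {set V} -> nat) : Prop :=
  (forall e, e \notin E -> m e = 0) /\
  perm_eq [seq m e | e <- enum E] (iota a #|E|).

Definition Delta_nonempty (V : finType) (a : nat) (E : {set {set V}}) : Prop :=
  exists m, in_Gamma a E m /\ triangle_decomposable m.

From mathcomp Require Import all_boot.

Set Implicit Arguments.
Unset Strict Implicit.
Unset Printing Implicit Defensive.

(* Glue the pieces one at a time.  If [mA] lies in Delta_a(A) and [mB] in
   Delta_0(B), raising every multiplicity of [mB] by [a + |A|] moves it into
   Gamma_(a+|A|)(B); the added part is a multiple of the simple graph B, hence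
   still triangle decomposable when B is.  The sum of the two multigraphs then
   uses the labels a, ..., a + |A| + |B| - 1 bijectively on A :|: B. *)

Lemma perm_enum_setU_disjoint (T : finType) (A B : {set T}) :
  [disjoint A & B] -> perm_eq (enum (A :|: B)) (enum A ++ enum B).
Proof.
move=> dAB; apply: uniq_perm; first exact: enum_uniq.
  rewrite cat_uniq !enum_uniq andbT /=; apply/hasPn => x.
  by rewrite !mem_enum => /(disjointFl dAB) ->.
by move=> x; rewrite mem_cat !mem_enum in_setU.
Qed.

Section TriangleDecomposable.

Variable V : finType.
Implicit Types (m : {set V} -> nat) (k : nat).

Lemma triangle_decomposableD m1 m2 :
  triangle_decomposable m1 -> triangle_decomposable m2 ->
  triangle_decomposable (fun e => m1 e + m2 e).
Proof.
move=> [t1 [t1_3 t1_cover]] [t2 [t2_3 t2_cover]].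
exists (fun S => t1 S + t2 S); split.
  by move=> S; case: (posnP (t1 S)) => [->|/t1_3 //]; apply: t2_3.
by move=> e e2; rewrite big_split /= -t1_cover // -t2_cover.
Qed.

Lemma triangle_decomposableMn k m :
  triangle_decomposable m -> triangle_decomposable (fun e => k * m e).
Proof.
move=> [t [t3 t_cover]]; exists (fun S => k * t S); split.
  by move=> S; rewrite muln_gt0 => /andP[_ /t3].
by move=> e e2; rewrite -big_distrr /= -t_cover.
Qed.

End TriangleDecomposable.

Section Gamma.

Variable V : finType.
Implicit Types (A B : {set {set V}}) (m : {set V} -> nat).

Lemma in_Gamma_shift a k B m :
  in_Gamma a B m -> in_Gamma (a + k) B (fun e => m e + k * mult_of_graph B e).
Proof.
rewrite /mult_of_graph => -[m0 m_perm]; split.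
  by move=> e eB; rewrite m0 // (negbTE eB) muln0.
have -> : [seq m e + k * (if e \in B then 1 else 0) | e <- enum B] =
          [seq k + i | i <- [seq m e | e <- enum B]].
  rewrite -map_comp; apply/eq_in_map => e; rewrite mem_enum /= => ->.
  by rewrite addnC muln1.
by rewrite (addnC a) iotaDl perm_map.
Qed.

Lemma in_GammaU a A B mA mB :
  [disjoint A & B] -> in_Gamma a A mA -> in_Gamma (a + #|A|) B mB ->
  in_Gamma a (A :|: B) (fun e => mA e + mB e).
Proof.
move=> dAB [mA0 mA_perm] [mB0 mB_perm]; split.
  by move=> e; rewrite in_setU negb_or => /andP[eA eB]; rewrite mA0 ?mB0.
have cardAB : #|A :|: B| = #|A| + #|B|.
  by apply/eqP; rewrite (leq_card_setU A B).2.
rewrite cardAB iotaD.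
apply: perm_trans (perm_map _ (perm_enum_setU_disjoint dAB)) _.
rewrite map_cat; apply: perm_cat.
  congr (perm_eq _ _): mA_perm; apply/eq_in_map => e; rewrite mem_enum => eA.
  by rewrite mB0 ?addn0 // (disjointFr dAB eA).
congr (perm_eq _ _): mB_perm; apply/eq_in_map => e; rewrite mem_enum => eB.
by rewrite mA0 // (disjointFl dAB eB).
Qed.

Lemma Delta_nonempty_set0 a : Delta_nonempty a (set0 : {set {set V}}).
Proof.
exists (fun _ => 0); split; first by split=> //; rewrite enum_set0 cards0.
by exists (fun _ => 0); split=> // e _; rewrite big1.
Qed.

Lemma Delta_nonemptyU a A B :
  [disjoint A & B] -> triangle_decomposable (mult_of_graph B) ->
  Delta_nonempty a A -> Delta_nonempty 0 B -> Delta_nonempty a (A :|: B).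
Proof.
move=> dAB B_dec [mA [mA_Gamma mA_dec]] [mB [mB_Gamma mB_dec]].
exists (fun e => mA e + (mB e + (a + #|A|) * mult_of_graph B e)); split.
  by apply: in_GammaU => //; have := in_Gamma_shift (a + #|A|) mB_Gamma.
by do 2![apply: triangle_decomposableD => //]; apply: triangle_decomposableMn.
Qed.

End Gamma.

Section Pieces.

Variables (V : finType) (I : finType) (Es : I -> {set {set V}}).
Hypothesis Es_disjoint : forall i j, i != j -> [disjoint Es i & Es j].
Hypothesis Es_decomposable :
  forall i, triangle_decomposable (mult_of_graph (Es i)).
Hypothesis Es_Delta : forall i, Delta_nonempty 0 (Es i).

Lemma Delta_nonempty_bigcup a (r : seq I) :
  uniq r -> Delta_nonempty a (\bigcup_(i <- r) Es i).
Proof.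
elim: r => [|j r IHr] /=.
  by rewrite big_nil => _; apply: Delta_nonempty_set0.
move=> /andP[jr r_uniq]; rewrite big_cons setUC.
apply: Delta_nonemptyU (Es_decomposable j) (IHr r_uniq) (Es_Delta j).
rewrite disjoint_sym bigcup_seq; apply: bigcup_disjoint => i ir.
by apply: Es_disjoint; apply: contraNneq jr => ->.
Qed.

End Pieces.

Theorem mainTheorem3 (V : finType) (E : {set {set V}}) (b : nat)
    (Es : 'I_b -> {set {set V}}) :
  simple_graph E ->
  (forall e, (e \in E) = [exists i, e \in Es i]) ->
  (forall i j : 'I_b, i != j -> [disjoint Es i & Es j]) ->
  (forall i, triangle_decomposable (mult_of_graph (Es i))) ->
  (forall i, Delta_nonempty 0 (Es i)) ->
  Delta_nonempty 0 E.
Proof.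
move=> _ E_cover Es_disjoint Es_decomposable Es_Delta.
have -> : E = \bigcup_(i < b) Es i.
  apply/setP => e; rewrite E_cover.
  by apply/existsP/bigcupP => [[i ei]|[i _ ei]]; exists i.
exact: Delta_nonempty_bigcup (index_enum_uniq _).
Qed.
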